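(* For every $n \ge 1$ and every $\omega \in S_n$, the poset $M_\omega$ is $B_2$-free if and only if $\omega$ avoids both the pattern $3412$ and the pattern $3421$.
   Context: Permutations $\omega\in S_n$ are written in one-line notation $\omega=\omega(1)\omega(2)\cdots\omega(n)$. Let ${\rm Inv}(\omega)=\{(i,j): 1\le i<j\le n,\ \omega(i)>\omega(j)\}$. For $1\le i\le n$ let $c_i(\omega)=\#\{j: i<j\le n,\ \omega(i)>\omega(j)\}$, and for $1\le i<j\le n$ let $c_{i,j}(\omega)=\#\{k: i<k<j,\ \omega(i)>\omega(k)\}$. Write $[m]=\{1,\dots,m\}$. For $i\in[n]$ with $c_i(\omega)>0$ and $x\in[c_i(\omega)]$, define $m_{i,x}(\omega)\in\mathbb{N}^n$ coordinatewise: its $j$-th coordinate is $0$ if $j<i$; $x$ if $j=i$; $0$ if $j>i$ and $(i,j)\in{\rm Inv}(\omega)$; and $\max\{0,\,x-c_{i,j}(\omega)\}$ if $j>i$ and $(i,j)\notin{\rm Inv}(\omega)$. Let $M_\omega=\{m_{i,x}(\omega): i\in[n],\ c_i(\omega)>0,\ x\in[c_i(\omega)]\}$, partially ordered by the product order on $\mathbb{N}^n$ ($u\le v$ iff $u_k\le v_k$ for all $k$). $B_2$ denotes the Boolean lattice of rank 2 (four elements: a minimum, a maximum, and two incomparable elements between them). A poset $P$ is $B_2$-free if no four distinct elements of $P$ form an induced subposet isomorphic to $B_2$. $\omega$ contains the pattern $3412$ (resp. $3421$) if there exist $i<j<k<l$ with $\omega(k)<\omega(l)<\omega(i)<\omega(j)$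 (resp. $\omega(l)<\omega(k)<\omega(i)<\omega(j)$); $\omega$ avoids the pattern otherwise. *)

(* Positions 1..n are represented by 'I_n (0..n-1) and
   values omega(i) by the permutation values in 'I_n; all notions below only
   depend on relative order, so the shift by one is harmless. *)
From mathcomp Require Import all_boot all_fingroup.
Set Implicit Arguments. Unset Strict Implicit. Unset Printing Implicit Defensive.

Definition inv_pair n (w : 'S_n) (i j : 'I_n) : bool := (i < j) && (w j < w i).

Definition cnt n (w : 'S_n) (i : 'I_n) : nat :=
  #|[set j : 'I_n | (i < j) && (w j < w i)]|.

Definition cnt2 n (w : 'S_n) (i j : 'I_n) : nat :=
  #|[set k : 'I_n | [&& i < k, k < j & w k < w i]]|.

(* m_{i,x}(w) in N^n; max{0, x - c} is truncated subtraction on nat *)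
Definition mvec n (w : 'S_n) (i : 'I_n) (x : nat) : {ffun 'I_n -> nat} :=
  [ffun j : 'I_n =>
     if j < i then 0
     else if j == i then x
     else if inv_pair w i j then 0
     else x - cnt2 w i j].

Definition inM n (w : 'S_n) (v : {ffun 'I_n -> nat}) : Prop :=
  exists (i : 'I_n) (x : nat),
    0 < cnt w i /\ 1 <= x <= cnt w i /\ v = mvec w i x.

Definition vle n (u v : {ffun 'I_n -> nat}) : Prop := forall k : 'I_n, u k <= v k.

Definition B2_free n (w : 'S_n) : Prop :=
  ~ exists a b c d : {ffun 'I_n -> nat},
      [/\ inM w a, inM w b, inM w c & inM w d] /\
      [&& a != b, a != c, a != d, b != c, b != d & c != d] /\
      [/\ vle a b, vle a c, vle b d & vle c d] /\
      ~ vle b c /\ ~ vle c b.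

Definition contains3412 n (w : 'S_n) : Prop :=
  exists i j k l : 'I_n, [/\ i < j, j < k & k < l] /\
    [/\ w k < w l, w l < w i & w i < w j].

Definition contains3421 n (w : 'S_n) : Prop :=
  exists i j k l : 'I_n, [/\ i < j, j < k & k < l] /\
    [/\ w l < w k, w k < w i & w i < w j].

(* The elements of M_w are the vectors m_{i,x} with 1 <= x <= c_i.  The whole
   proof rests on an explicit description of the product order on them
   (mvec_le_inv, mvec_le_same, mvec_le_shift): for x > 0,
     m_{i,x} <= m_{i',y}  iff  i = i' and x <= y,
                          or   i' < i, w(i') < w(i) and x + c_{i',i} <= y.
   Call (p, q) a pattern head when p < q, w(p) < w(q) and at least two
   positions after q carry values below w(p); by pattern_head_iff this is
   exactly an occurrence of 3412 or 3421 starting with p, q.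
   - A pattern head (p, q) yields the induced B_2 with bottom m_{q,1},
     incomparable middle elements m_{p,1+c_{p,q}} and m_{q,2}, and top
     m_{p,2+c_{p,q}} (pattern_head_not_B2_free).
   - Conversely, in an induced B_2 a <= b, c <= d the middle elements have
     distinct indices, and counting the entries c_{i,j} along the chain shows
     that (index of d, index of the later middle element) is a pattern head
     (B2_pattern_head, no_pattern_head_B2_free). *)
From Pilot Require Import Defs.
From mathcomp Require Import all_boot all_fingroup.
From mathcomp Require Import zify.
Set Implicit Arguments. Unset Strict Implicit. Unset Printing Implicit Defensive.

Lemma card_sub_setU (T : finType) (A B C : {set T}) :
  A \subset B :|: C -> #|A| <= #|B| + #|C|.
Proof. by move=> /subset_leq_card /leq_trans; apply; apply: leq_card_setU. Qed.

Lemma card_disjoint_sub (T : finType) (A B C : {set T}) :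
  [disjoint A & B] -> A :|: B \subset C -> #|A| + #|B| <= #|C|.
Proof.
by move=> dAB /subset_leq_card; rewrite cardsU (disjoint_setI0 dAB) cards0 subn0.
Qed.

Section OrderOnM.
Variables (n : nat) (w : 'S_n).

Definition tail_below (p q : 'I_n) : nat :=
  #|[set k : 'I_n | (q < k) && (w k < w p)]|.

(* (p, q) are the "3" and "4" of an occurrence of 3412 or 3421. *)
Definition pattern_head (p q : 'I_n) : Prop :=
  [/\ p < q, w p < w q & 1 < tail_below p q].

Lemma perm_val_lt (i j : 'I_n) : (i : nat) != j -> ~~ (w i < w j) -> w j < w i.
Proof.
move=> ij; have /eqP wij : (w i : nat) != w j.
  by apply: contra ij => /eqP /val_inj /perm_inj ->.
lia.
Qed.

Lemma ord_gt_eqF (i j : 'I_n) : i < j -> (j == i) = false.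
Proof. exact: gtn_eqF. Qed.

Lemma mvec_diag (i : 'I_n) (x : nat) : mvec w i x i = x.
Proof. by rewrite ffunE ltnn eqxx. Qed.

Lemma mvec_before (i j : 'I_n) (x : nat) : j < i -> mvec w i x j = 0.
Proof. by move=> ji; rewrite ffunE ji. Qed.

Lemma mvec_ascent (i j : 'I_n) (x : nat) :
  i < j -> w i < w j -> mvec w i x j = x - cnt2 w i j.
Proof.
move=> ij wij; rewrite ffunE ltnNge (ltnW ij) /= ord_gt_eqF //.
by rewrite /Defs.inv_pair ij /= ltnNge (ltnW wij).
Qed.

Lemma cnt2_mono (i j j' : 'I_n) : j <= j' -> cnt2 w i j <= cnt2 w i j'.
Proof. by move=> jj'; apply: subset_leq_card; apply/subsetP => k; rewrite !inE; lia. Qed.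

Lemma cnt2_step (i j j' : 'I_n) :
  i < j -> j < j' -> w j < w i -> (cnt2 w i j).+1 <= cnt2 w i j'.
Proof.
move=> ij jj' wji.
have : #|j |: [set k : 'I_n | [&& i < k, k < j & w k < w i]]| <= cnt2 w i j'.
  by apply: subset_leq_card; apply/subsetP => k; rewrite !inE => /orP [/eqP ->|]; lia.
by rewrite cardsU1 inE ltnn andbF.
Qed.

Lemma cnt2_triangle (i' i j : 'I_n) :
  i' < i -> w i' < w i -> cnt2 w i' j <= cnt2 w i' i + cnt2 w i j.
Proof.
move=> i'i wi'i; apply: card_sub_setU; apply/subsetP => k; rewrite !inE.
by case: (ltngtP k i) => [||/val_inj ->]; lia.
Qed.

Lemma cnt_decomp (p q : 'I_n) :
  p < q -> w p < w q -> cnt w p = cnt2 w p q + tail_below p q.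
Proof.
move=> pq wpq; apply/eqP; rewrite eqn_leq; apply/andP; split.
  apply: card_sub_setU; apply/subsetP => k; rewrite !inE.
  by case: (ltngtP k q) => [||/val_inj ->]; lia.
apply: card_disjoint_sub; last by apply/subsetP => k; rewrite !inE; lia.
by rewrite -setI_eq0; apply/eqP/setP => k; rewrite !inE; lia.
Qed.

Lemma tail_below_shift (p b c : 'I_n) :
  b < c -> w p < w b -> w p < w c -> tail_below p b <= cnt2 w b c + tail_below p c.
Proof.
move=> bc wpb wpc; apply: card_sub_setU; apply/subsetP => k; rewrite !inE.
by case: (ltngtP k c) => [||/val_inj ->]; lia.
Qed.

Lemma mvec_le_inv (i i' : 'I_n) (x y : nat) :
  0 < x -> vle (mvec w i x) (mvec w i' y) ->
  (i = i' /\ x <= y) \/ [/\ i' < i, w i' < w i & x + cnt2 w i' i <= y].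
Proof.
move=> x0 /(_ i); rewrite mvec_diag ffunE.
case: (ltngtP i i') => [ii'|i'i|/val_inj <-]; [lia| |by rewrite eqxx; left].
rewrite ord_gt_eqF // /Defs.inv_pair i'i /=; case: ifP => [|wii']; first lia.
move=> le; right; split=> //; last lia.
by apply: perm_val_lt; [lia|rewrite wii'].
Qed.

Lemma mvec_le_same (i : 'I_n) (x y : nat) :
  x <= y -> vle (mvec w i x) (mvec w i y).
Proof.
move=> xy k; rewrite !ffunE.
by do 3 case: ifP => // _; apply: leq_sub2r.
Qed.

Lemma mvec_le_shift (i' i : 'I_n) (x y : nat) :
  i' < i -> w i' < w i -> x + cnt2 w i' i <= y -> vle (mvec w i x) (mvec w i' y).
Proof.
move=> i'i wi'i le k; case: (ltngtP k i) => [ki|ik|/val_inj ->].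
- by rewrite mvec_before.
- rewrite ffunE ltnNge (ltnW ik) ord_gt_eqF //= /Defs.inv_pair ik /=.
  case: ifP => // wki; have wik : w i < w k by apply: perm_val_lt; [lia|rewrite wki].
  rewrite mvec_ascent; [|lia|lia].
  have := cnt2_triangle k i'i wi'i; lia.
- by rewrite mvec_diag mvec_ascent //; lia.
Qed.

Lemma mvec_le_tail (i i' : 'I_n) (x y : nat) :
  0 < x -> i != i' -> y <= cnt w i' -> vle (mvec w i x) (mvec w i' y) ->
  [/\ i' < i, w i' < w i & x <= tail_below i' i].
Proof.
move=> x0 ii' ycnt /(mvec_le_inv x0) [[/eqP]|[i'i wi'i le]]; first by rewrite (negPf ii').
by split=> //; move: ycnt; rewrite (cnt_decomp i'i wi'i); lia.
Qed.

Lemma B2_pattern_head (ia ib ic id : 'I_n) (xa xb xc xd : nat) :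
  0 < xa -> 0 < xb -> 0 < xc -> xd <= cnt w id -> ib < ic ->
  mvec w ia xa != mvec w ic xc ->
  vle (mvec w ia xa) (mvec w ib xb) -> vle (mvec w ia xa) (mvec w ic xc) ->
  vle (mvec w ib xb) (mvec w id xd) -> vle (mvec w ic xc) (mvec w id xd) ->
  ~ vle (mvec w ic xc) (mvec w ib xb) ->
  pattern_head id ic.
Proof.
move=> xa0 xb0 xc0 xdcnt bc ac hab hac hbd hcd ncb.
have cd : ic != id.
  by apply/eqP => ecd; subst ic; have [[eb _]|[]] := mvec_le_inv xb0 hbd; [subst|]; lia.
have [idc wdc tail_c] := mvec_le_tail xc0 cd xdcnt hcd.
split=> //; case: (leqP 2 xc) => [|xc1]; first lia.
have xc_one : xc = 1 by lia.
subst xc.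
(* Now a lies strictly below c, hence at a later index than c and b. *)
have [[eac xac]|[ica wca xac]] := mvec_le_inv xa0 hac.
  by move: ac; rewrite eac (_ : xa = 1) ?eqxx //; lia.
have [[eab _]|[iba wba xab]] := mvec_le_inv xa0 hab; first by subst; lia.
(* c is not below b, so w(c) < w(b): the position ic counts in c_{ib,ia}. *)
have wcb : w ic < w ib.
  apply: perm_val_lt; first lia.
  apply/negP => wbc; apply: ncb; apply: mvec_le_shift => //.
  have := cnt2_mono ib (ltnW ica); lia.
have bd : ib != id by apply/eqP => ebd; subst ib; lia.
have [idb wdb tail_b] := mvec_le_tail xb0 bd xdcnt hbd.
have := tail_below_shift bc wdb wdc; have := cnt2_step bc ica wcb; lia.
Qed.

Lemma pattern_head_not_B2_free (p q : 'I_n) : pattern_head p q -> ~ B2_free w.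
Proof.
case=> pq wpq tail2; apply.
have cnt_q : 2 <= cnt w q.
  apply: leq_trans tail2 _; apply: subset_leq_card.
  by apply/subsetP => k; rewrite !inE; lia.
have cnt_p := cnt_decomp pq wpq.
exists (mvec w q 1), (mvec w p (1 + cnt2 w p q)), (mvec w q 2),
       (mvec w p (2 + cnt2 w p q)).
have differ (u v : {ffun 'I_n -> nat}) k : u k != v k -> u != v.
  by apply: contra => /eqP ->.
split; [|split; [|split; [|split]]].
- split; [exists q, 1|exists p, (1 + cnt2 w p q)|exists q, 2|exists p, (2 + cnt2 w p q)];
  by do 2 (split; first lia).
- by repeat (apply/andP; split); [apply: (differ _ _ p)|apply: (differ _ _ q)|
    apply: (differ _ _ p)..]; rewrite ?mvec_diag ?mvec_before //; lia.
- by split; [apply: mvec_le_shift|apply: mvec_le_same|apply: mvec_le_same|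
             apply: mvec_le_shift] => //; lia.
- by move/(_ p); rewrite mvec_diag mvec_before //; lia.
- by move/(_ q); rewrite mvec_diag mvec_ascent //; lia.
Qed.

Lemma no_pattern_head_B2_free : ~ (exists p q, pattern_head p q) -> B2_free w.
Proof.
move=> no_head [a [b [c [d [[[ia [xa [_ [ha ->]]]] [ib [xb [_ [hb ->]]]]
  [ic [xc [_ [hc ->]]]] [id [xd [_ [hd ->]]]]] [distinct [[ab ac bd cd] [nbc ncb]]]]]]]].
move: distinct => /and5P [neq_ab neq_ac _ _ _].
case: (ltngtP ib ic) => [bc|cb|/val_inj ebc].
- by apply: no_head; exists id, ic; apply: (@B2_pattern_head ia ib ic id xa xb xc xd) => //; lia.
- by apply: no_head; exists id, ib; apply: (@B2_pattern_head ia ic ib id xa xc xb xd) => //; lia.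
- subst ic; case: (leqP xb xc) => xbc.
  + by apply: nbc; apply: mvec_le_same.
  + by apply: ncb; apply: mvec_le_same; lia.
Qed.

Lemma pattern_head_iff :
  (contains3412 w \/ contains3421 w) <-> exists p q, pattern_head p q.
Proof.
split.
  case=> [[i [j [k [l [[ij jk kl] [wkl wli wij]]]]]]|[i [j [k [l [[ij jk kl] [wlk wki wij]]]]]]];
  exists i, j; split=> //; apply/card_gt1P; exists k, l; rewrite !inE;
  (split; [lia|lia|by apply/eqP => e; subst; lia]).
case=> p [q [pq wpq /card_gt1P [r [s [+ + rs]]]]]; rewrite !inE.
wlog lt_rs : r s rs / r < s => [hwlog|/andP [qr wrp] /andP [qs wsp]].
  have rs' : (r : nat) != s by apply: contra rs => /eqP /val_inj ->.
  case: (ltngtP r s) => [lt|gt|]; [exact: hwlog| |lia].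
  by move=> hr hs; apply: (hwlog s r) => //; rewrite eq_sym.
have rs' : (w r : nat) != w s by apply: contra rs => /eqP /val_inj /perm_inj ->.
case: (ltngtP (w r) (w s)) => [wrs|wsr|]; last lia.
- by left; exists p, q, r, s; split; split=> //; lia.
- by right; exists p, q, r, s; split; split=> //; lia.
Qed.

End OrderOnM.

Theorem mainTheorem1 (n : nat) (hn : 1 <= n) (w : 'S_n) :
  B2_free w <-> (~ contains3412 w /\ ~ contains3421 w).
Proof.
have [to_head of_head] := pattern_head_iff w.
split.
- move=> free; split=> occ.
  + by have [p [q /pattern_head_not_B2_free]] := to_head (or_introl occ); apply.
  + by have [p [q /pattern_head_not_B2_free]] := to_head (or_intror occ); apply.
- by case=> no3412 no3421; apply: no_pattern_head_B2_free => /of_head [].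
Qed.
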